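(* Let $f: (\mathbb{R}^{+})^n \to (\mathbb{R}^{+})^n$ be homogeneous and monotone such that $\mathcal{G}(f)$ is strongly connected. Then for every $\lambda \in \mathbb{R}^{+}$ the super-eigenspace $S^\lambda(f) = \{x \in (\mathbb{R}^{+})^n : f(x) \le \lambda x\}$ is bounded in the Hilbert projective metric.
   Context: Homogeneous: $f(\lambda x) = \lambda f(x)$ for all $\lambda > 0$; monotone: $x \le y$ componentwise implies $f(x) \le f(y)$. For $u > 0$ and $J \subseteq \{1,\dots,n\}$, $u_J$ is the vector with entries $u$ on $J$ and $1$ off $J$. $\mathcal{G}(f)$ is the directed graph on $\{1,\dots,n\}$ with an edge $i \to j$ iff $\lim_{u\to\infty} f_i(u_{\{j\}}) = \infty$. Hilbert projective metric: $d_H(y,z) = \max_i \log(y_i/z_i) - \min_i \log(y_i/z_i)$; a set $A$ is bounded if $\sup_{y,z\in A} d_H(y,z) < \infty$ (the empty set is bounded). *)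

From HB Require Import structures.
From mathcomp Require Import all_boot all_order all_algebra.
From mathcomp Require Import all_classical all_reals all_analysis.
From Stdlib Require Import Relations.
Set Implicit Arguments. Unset Strict Implicit. Unset Printing Implicit Defensive.
Import Order.TTheory GRing.Theory Num.Theory.
Import numFieldNormedType.Exports.
Local Open Scope classical_set_scope.
Local Open Scope ring_scope.

Section Defs.
Context {R : realType} {n : nat}.
Notation vec := ('I_n -> R).

Definition posvec (x : vec) : Prop := forall i, 0 < x i.

Definition vle (x y : vec) : Prop := forall i, x i <= y i.

Definition maps_pos (f : vec -> vec) : Prop :=
  forall x, posvec x -> posvec (f x).

Definition homogeneous_pos (f : vec -> vec) : Prop :=
  forall (l : R) x, 0 < l -> posvec x -> f (fun i => l * x i) = (fun i => l * f x i).

Definition monotone_pos (f : vec -> vec) : Prop :=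
  forall x y, posvec x -> posvec y -> vle x y -> vle (f x) (f y).

Definition uvec (u : R) (J : {set 'I_n}) : vec :=
  fun i => if i \in J then u else 1.

Definition Gedge (f : vec -> vec) (i j : 'I_n) : Prop :=
  (fun u : R => f (uvec u [set j]) i) @ +oo --> +oo.

Definition strongly_connected (f : vec -> vec) : Prop :=
  forall i j : 'I_n, clos_refl_trans 'I_n (Gedge f) i j.

(* Hilbert projective metric:
   max_i log(y_i/z_i) - min_i log(y_i/z_i)
   = max_{i,j} (log(y_i/z_i) - log(y_j/z_j))   (which is >= 0; 0 when n = 0) *)
Definition dH (y z : vec) : R :=
  \big[Num.max/0]_(i < n) \big[Num.max/0]_(j < n)
     (ln (y i / z i) - ln (y j / z j)).

Definition dH_bounded (A : set vec) : Prop :=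
  exists C : R, forall y z, A y -> A z -> dH y z <= C.

Definition super_eigenspace (f : vec -> vec) (l : R) : set vec :=
  [set x | posvec x /\ vle (f x) (fun i => l * x i)].
End Defs.

(** If [x] satisfies [f x <= l x] and an edge [i -> j] of [G(f)] is given, then
    [x >= m u_{j}] with [m] the least entry of [x] and [u = x_j / m]; by monotonicity
    and homogeneity [m f_i(u_{j}) <= f_i(x) <= l x_i].  So a bound on [x_i / m]
    bounds [f_i(u_{j})], hence [u], hence [x_j / m].  Strong connectivity propagates
    this from the least entry to every entry, bounding all ratios [x_i / x_j] on
    [S^l(f)] uniformly, which bounds the Hilbert metric. *)
From mathcomp Require Import all_boot all_order all_algebra.
From mathcomp Require Import all_classical all_reals all_analysis.
From mathcomp Require Import ring.
From Stdlib Require Import Relations.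
Import Order.TTheory GRing.Theory Num.Theory.
Local Open Scope ring_scope.

Section RatioBound.
Context {R : realType} {n : nat} {f : ('I_n -> R) -> ('I_n -> R)}.
Hypotheses (fhom : homogeneous_pos f) (fmon : monotone_pos f).
Context {l : R} (lpos : 0 < l).

Definition lower_bound (m : R) (x : 'I_n -> R) : Prop := forall t, m <= x t.

Definition propagates_bound (i j : 'I_n) : Prop :=
  forall B : R, exists C : R, forall x m, super_eigenspace f l x ->
    0 < m -> lower_bound m x -> x i <= B * m -> x j <= C * m.

Lemma super_eigenspace_uvec_le {x : 'I_n -> R} {m B : R} {i} j :
  super_eigenspace f l x -> 0 < m -> lower_bound m x -> x i <= B * m ->
  f (uvec (x j / m) [set j]) i <= l * B.
Proof.
move=> [xpos xsup] m0 mx xiB.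
have u0 : 0 < x j / m by rewrite divr_gt0.
have upos : posvec (uvec (x j / m) [set j]).
  by move=> t; rewrite /uvec; case: (t \in _).
have mu_pos : posvec (fun t => m * uvec (x j / m) [set j] t).
  by move=> t; apply: mulr_gt0.
have mu_le_x : vle (fun t => m * uvec (x j / m) [set j] t) x.
  move=> t; rewrite /uvec; case: ifP => [/set1P -> | _].
    by rewrite mulrC divfK // gt_eqF.
  by rewrite mulr1.
have := @fmon _ _ mu_pos xpos mu_le_x i; rewrite (@fhom _ _ m0 upos) => fmu.
rewrite -(ler_pM2l m0); apply: le_trans fmu _; apply: le_trans (xsup i) _.
by rewrite mulrCA ler_pM2l // mulrC.
Qed.

Lemma propagates_bound_edge i j : Gedge f i j -> propagates_bound i j.
Proof.
move=> edge B; have [M [_ fM]] := proj1 (cvgryPgt _) edge (l * B).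
exists (Num.max M 1) => x m Sx m0 mx xiB.
rewrite -ler_pdivrMr // leNgt; apply/negP => ltMu.
have /fM : M < x j / m by apply: le_lt_trans ltMu; rewrite le_max lexx.
by rewrite ltNge (super_eigenspace_uvec_le j Sx m0 mx xiB).
Qed.

Lemma propagates_bound_refl i : propagates_bound i i.
Proof. by move=> B; exists B. Qed.

Lemma propagates_bound_trans {i j k} :
  propagates_bound i j -> propagates_bound j k -> propagates_bound i k.
Proof.
move=> ij jk B; have [C1 HC1] := ij B; have [C2 HC2] := jk C1.
by exists C2 => x m Sx m0 mx xi; apply: HC2 => //; apply: HC1.
Qed.

Lemma propagates_bound_rt {i j} :
  clos_refl_trans 'I_n (Gedge f) i j -> propagates_bound i j.
Proof.
elim=> [a b | a | a b c _ ab _ bc].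
- exact: propagates_bound_edge.
- exact: propagates_bound_refl.
- exact: propagates_bound_trans ab bc.
Qed.

Lemma super_eigenspace_ratio_bound : strongly_connected f ->
  exists M : R, 1 <= M /\
    forall x, super_eigenspace f l x -> forall i j, x i <= M * x j.
Proof.
move=> sc.
have pair_bound (p : 'I_n * 'I_n) : exists C : R, forall x,
    super_eigenspace f l x -> lower_bound (x p.1) x -> x p.2 <= C * x p.1.
  have [C HC] := propagates_bound_rt (sc p.1 p.2) 1.
  exists C => x Sx xmin; apply: HC => //; last by rewrite mul1r.
  by case: Sx => xpos _; apply: xpos.
have [C HC] := choice pair_bound.
exists (\big[Num.max/1]_p C p); split; first exact: bigmax_ge_id.
move=> x Sx i j; have xpos : posvec x by case: Sx.
have [k _ kmin] := arg_minP x (isT : predT i).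
have xmin : lower_bound (x k) x by move=> t; apply: kmin.
have xiC := HC (k, i) x Sx xmin; apply: (le_trans xiC).
have C0 : 0 <= C (k, i).
  by rewrite -(pmulr_lge0 _ (xpos k)); apply: (le_trans (ltW (xpos i))).
by apply: ler_pM => //; [exact: ltW | exact: (le_bigmax _ _ (k, i))].
Qed.
End RatioBound.

Lemma dH_le_ratio_bound (R : realType) (n : nat) (M : R) (y z : 'I_n -> R) :
  1 <= M -> posvec y -> posvec z ->
  (forall i j, y i <= M * y j) -> (forall i j, z i <= M * z j) ->
  dH y z <= ln (M * M).
Proof.
move=> M1 ypos zpos yM zM.
have M0 : 0 < M by apply: lt_le_trans M1.
have lnMM0 : 0 <= ln (M * M) by apply: ln_ge0; rewrite mulr_ege1.
apply: bigmax_le => // i _; apply: bigmax_le => // j _.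
have yi := ypos i; have yj := ypos j; have zi := zpos i; have zj := zpos j.
rewrite -ln_div ?posrE ?divr_gt0 // ler_ln ?posrE ?divr_gt0 ?mulr_gt0 //.
have -> : y i / z i / (y j / z j) = (y i / y j) * (z j / z i).
  by field; rewrite ?gt_eqF.
apply: ler_pM.
- by rewrite divr_ge0 ?ltW.
- by rewrite divr_ge0 ?ltW.
- by rewrite ler_pdivrMr // mulrC.
- by rewrite ler_pdivrMr // mulrC.
Qed.

Theorem theorem4 (R : realType) (n : nat) (f : ('I_n -> R) -> ('I_n -> R)) :
  maps_pos f -> homogeneous_pos f -> monotone_pos f -> strongly_connected f ->
  forall l : R, 0 < l -> dH_bounded (super_eigenspace f l).
Proof.
move=> _ fhom fmon sc l lpos.
have [M [M1 ratioM]] := super_eigenspace_ratio_bound fhom fmon lpos sc.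
exists (ln (M * M)) => y z Sy Sz.
apply: dH_le_ratio_bound M1 _ _ (ratioM y Sy) (ratioM z Sz).
- by case: Sy.
- by case: Sz.
Qed.
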